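(* Let $G$ be a finite simple graph on vertex set $\{x_1,\dots,x_n\}$, let $\Bbbk$ be a field and $S=\Bbbk[x_1,\dots,x_n]$. If $M$ is a $2$-admissable matching of $G$ which is a perfect matching of $G$, then for all $2\leq k\leq |M|$, \[b_{|M|-k+1,\,2|M|}(S/I(G)^{[k]})\neq 0.\]
   Context: $b_{i,j}$ denotes the graded Betti numbers over $S$. $I(G)$ is the edge ideal; $I(G)^{[k]}$ is generated by the products $e_1\cdots e_k$ over all matchings of size $k$ (edge $\{x_i,x_j\}$ identified with $x_ix_j$), and is $(0)$ if $k>\operatorname{mat}(G)$ (the matching number). A perfect matching covers every vertex. Two edges form a gap if they are disjoint and no edge joins a vertex of one to a vertex of the other. A sequence $(a_1,\dots,a_n)$ of integers is $k$-admissable if $a_i\ge1$ and $\sum a_i\le n+k-1$. For $1\le k\le\operatorname{mat}(G)$, a matching $M$ is $k$-admissable if there are nonempty pairwise disjoint $M_1,\dots,M_r\subseteq M$ with union $M$ such that edges from different $M_i$'s always form a gap in $G$, $(|M_1|,\dots,|M_r|)$ is $k$-admissable, and the induced subgraph on $\bigcup_{e\in M_i}e$ is a forest for each $i$. *)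

From HB Require Import structures.
From mathcomp Require Import all_boot all_order all_algebra.
Set Implicit Arguments. Unset Strict Implicit. Unset Printing Implicit Defensive.
Import GRing.Theory.

Section Graphs.
Variable n : nat.
(* A finite simple graph on vertices x_1..x_n is encoded as a symmetric,
   irreflexive relation e on 'I_n (symmetry/irreflexivity are hypotheses
   of the theorem).  Edges are 2-element vertex sets. *)
Variable e : rel 'I_n.

Definition is_edge (f : {set 'I_n}) : bool :=
  [exists x, exists y, e x y && (f == [set x; y])].

Definition matching (M : {set {set 'I_n}}) : bool :=
  [forall f in M, is_edge f] &&
  [forall f in M, forall g in M, (f != g) ==> [disjoint f & g]].

Definition perfect_matching (M : {set {set 'I_n}}) : bool :=
  matching M && (cover M == [set: 'I_n]).

Definition gap (f g : {set 'I_n}) : bool :=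
  [disjoint f & g] && [forall x in f, forall y in g, ~~ e x y].

Definition forest_on (W : {set 'I_n}) : Prop :=
  forall s : seq 'I_n, uniq s -> 3 <= size s -> all (mem W) s -> ~~ cycle e s.

(* k-admissable matching: a partition M_1,...,M_r of M into nonempty blocks
   such that edges in different blocks form gaps, (|M_1|,...,|M_r|) is
   k-admissable (a_i >= 1 and sum a_i <= r + k - 1), and each block induces
   a forest. *)
Definition admissible_matching (k : nat) (M : {set {set 'I_n}}) : Prop :=
  matching M /\
  exists P : {set {set {set 'I_n}}},
    [/\ partition P M,
        [forall A in P, forall B in P,
           (A != B) ==> [forall f in A, forall g in B, gap f g]],
        (forall A, A \in P -> 1 <= #|A|),
        \sum_(A in P) #|A| <= #|P| + k - 1
      & forall A, A \in P -> forest_on (cover A)].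

(* Membership of the monomial x^m in the monomial ideal I(G)^[k]:
   x^m is divisible by some generator x^{V(N)}, N a matching with |N| = k.
   (If k > mat(G) there are no such N and the ideal is (0).) *)
Definition in_sqpow (k : nat) (m : 'I_n -> nat) : bool :=
  [exists N : {set {set 'I_n}},
     [&& matching N, #|N| == k & [forall x in cover N, 0 < m x]]].

(* ---- Graded Betti numbers of S/I(G)^[k], S = K[x_1..x_n] ----
   b_{i,j}(S/I) = dim_K Tor_i^S(S/I, K)_j, computed as the homology of the
   Koszul complex K(x_1..x_n) (x) S/I in degree j.  Since I is a monomial
   ideal, S/I has K-basis the monomials x^m not in I, so the degree-j part
   of K_i(x; S/I) has basis e_F (x) x^m with |F| = i, deg m = j - i,
   x^m not in I; and d(e_F (x) x^m) = sum_{x in F} (+-) e_{F\x} (x) x*x^m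
   (terms with x*x^m in I vanish). *)
Variable K : fieldType.
Variable k : nat.

Section Degree.
Variable j : nat.

Definition kbasis_t := ({set 'I_n} * {ffun 'I_n -> 'I_j.+1})%type.

Definition mdeg (m : {ffun 'I_n -> 'I_j.+1}) : nat := \sum_(x : 'I_n) (m x : nat).

Definition kvalid (i : nat) (p : kbasis_t) : bool :=
  [&& #|p.1| == i, i <= j, mdeg p.2 == j - i & ~~ in_sqpow k (fun x => (p.2 x : nat))].

Definition kd_entry (i : nat) (p q : kbasis_t) : K :=
  match [pick x in p.1 :\: q.1] with
  | Some x =>
      if [&& 0 < i, kvalid i p, kvalid i.-1 q, q.1 == p.1 :\ x &
             [forall y, (q.2 y : nat) == p.2 y + (y == x)]]
      then ((-1) ^+ #|[set y in p.1 | (y < x)%N]|)%R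
      else 0%R
  | None => 0%R
  end.

(* matrix of the differential d_i : K_i -> K_{i-1} in degree j
   (rows/columns outside the basis are zero) *)
Definition kmat (i : nat) : 'M[K]_(#|{: kbasis_t}|) :=
  \matrix_(a, b) kd_entry i (enum_val a) (enum_val b).

Definition betti (i : nat) : nat :=
  #|[set p : kbasis_t | kvalid i p]| - \rank (kmat i) - \rank (kmat i.+1).

End Degree.
End Graphs.

From mathcomp Require Import all_boot all_order all_algebra zify.
Set Implicit Arguments. Unset Strict Implicit. Unset Printing Implicit Defensive.
Import GRing.Theory.

(* Let Y be a set of k edges of M containing every edge of M that is joined by
   an edge of G to another edge of M; 2-admissibility puts all such edges in at
   most two edges of M, so Y exists for 2 <= k <= |M|.  Partition the vertices
   into V(Y) and the remaining |M| - k edges of M, and let F be a transversal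
   (one vertex per block, so |F| = |M| - k + 1).  A k-matching avoiding F lies
   inside V(Y) minus a vertex, which is too small; hence e_F (x) x^(V \ F) is a
   basis element of the Koszul complex of S/I(G)^[k] in degree 2|M|.  It is a
   cycle, since x * x^(V \ F) lies in I(G)^[k] for every x in F.  The sum over
   all transversals, signed by their inversion number with respect to the
   blocks, is a cocycle: the faces of a set with one repeated block cancel in
   pairs.  Their pairing is +-1, so the homology does not vanish. *)

Section SupportedRank.
Variables (F : fieldType) (N : nat) (S : {set 'I_N}).
Local Open Scope ring_scope.

Definition supp_proj : 'M[F]_N := diag_mx (\row_a (a \in S)%:R).

Lemma mxrank_supp_proj : (\rank supp_proj <= #|S|)%N.
Proof.
pose E : 'M[F]_(#|S|, N) := \matrix_(r, b) (enum_val r == b)%:R.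
suff -> : supp_proj = E^T *m E by apply: leq_trans (mxrankM_maxr _ _) (rank_leq_row _).
apply/matrixP => a b; rewrite !mxE.
have [aS | aS] := boolP (a \in S).
  rewrite (bigD1 (enum_rank_in aS a)) //= !mxE enum_rankK_in // eqxx mul1r.
  rewrite big1 ?addr0 // => r ra; rewrite !mxE; have [ea|] := eqP; last by rewrite mul0r.
  by case/eqP: ra; apply: enum_val_inj; rewrite enum_rankK_in.
rewrite mul0rn big1 // => r _; rewrite !mxE; have [ea|] := eqP; last by rewrite mul0r.
by case/negP: aS; rewrite -ea enum_valP.
Qed.

Lemma rank_add_lt_support m l (A : 'M[F]_(N, m)) (B : 'M[F]_(l, N))
    (z : 'rV[F]_N) (phi : 'cV[F]_N) :
  (forall a b, a \notin S -> A a b = 0) ->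
  (forall a b, b \notin S -> B a b = 0) ->
  (forall a, a \notin S -> z 0 a = 0) ->
  B *m A = 0 -> z *m A = 0 -> B *m phi = 0 -> z *m phi != 0 ->
  (\rank A + \rank B < #|S|)%N.
Proof.
move=> A_supp B_supp z_supp BA zA Bphi zphi.
set C := col_mx B z.
have CP : C *m supp_proj = C.
  apply/matrixP => r b; rewrite mul_mx_diag !mxE.
  have [bS|bS] := boolP (b \in S); first by rewrite mulr1.
  rewrite mulr0; case: (splitP r) => r' _; rewrite ?col_mxEu ?col_mxEd.
    by rewrite B_supp.
  by rewrite ord1 z_supp.
have PA : supp_proj *m A = A.
  apply/matrixP => a b; rewrite mul_diag_mx !mxE.
  by have [aS|aS] := boolP (a \in S); rewrite ?mul1r // mul0r A_supp.
have rkBC : (\rank B < \rank C)%N.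
  apply: rank_ltmx; rewrite ltmxE -addsmxE addsmxSl /= col_mx_sub submx_refl /=.
  apply: contra zphi => /submxP[w ->]; by rewrite -mulmxA Bphi mulmx0.
have rkC : (\rank C <= \rank (supp_proj :&: kermx A))%N.
  apply: mxrankS; rewrite sub_capmx -{1}CP submxMl /=.
  by apply/sub_kermxP; rewrite mul_col_mx BA zA col_mx0.
have := mxrank_mul_ker supp_proj A; rewrite PA.
have := mxrank_supp_proj; lia.
Qed.

End SupportedRank.

Lemma card_lt_setD1 n (P : {set 'I_n}) x z : x \in P ->
  #|[set y in P | y < z]| = (x < z) + #|[set y in P :\ x | y < z]|.
Proof.
move=> xP; rewrite (cardsD1 x) !inE xP /=; congr (_ + _).
by apply: eq_card => y; rewrite !inE andbA.
Qed.

Lemma setD1C (T : finType) (A : {set T}) x y : A :\ x :\ y = A :\ y :\ x.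
Proof. by rewrite !setDDl setUC. Qed.

Lemma card_lt_sum n (A : {set 'I_n}) z : #|[set y in A | y < z]| = \sum_(y in A) (y < z).
Proof. by rewrite -sum1dep_card big_mkcondr; apply: eq_bigr => y _; case: (y < z). Qed.

Section Signs.
Variable R : pzRingType.
Local Open Scope ring_scope.

Lemma signr_add_eq0 (a b : nat) : ((a + b) %% 2 = 1)%N -> (-1) ^+ a + (-1) ^+ b = 0 :> R.
Proof.
rewrite modn2 -signr_odd -[(-1) ^+ b]signr_odd oddD => /eqP; rewrite eqb1 => /addbP <-.
by rewrite signrN subrr.
Qed.

Lemma sum_two_support (T : finType) (F : T -> R) a b : a != b ->
  (forall q, F q != 0 -> (q == a) || (q == b)) -> \sum_q F q = F a + F b.
Proof.
move=> ab supp; rewrite (bigD1 a) //= (bigD1 b) 1?eq_sym //= big1 ?addr0 //.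
move=> q /andP[qb qa]; apply/eqP/negPn/negP => /supp.
by rewrite (negbTE qa) (negbTE qb).
Qed.

End Signs.

Section KoszulComplex.
Variables (n : nat) (e : rel 'I_n) (K : fieldType) (k j : nat).
Local Notation kbasis := (kbasis_t n j).
Local Notation kvalid := (kvalid e k).
Local Notation kd_entry := (kd_entry e K k).
Local Open Scope ring_scope.

Lemma in_sqpow_mono (m1 m2 : 'I_n -> nat) :
  (forall x, (0 < m1 x)%N -> (0 < m2 x)%N) -> in_sqpow e k m1 -> in_sqpow e k m2.
Proof.
move=> m12 /existsP[N /and3P[mN cN /forall_inP m1N]]; apply/existsP; exists N.
by rewrite mN cN; apply/forall_inP => x /m1N /m12.
Qed.

Definition ksign (P : {set 'I_n}) (x : 'I_n) : K := (-1) ^+ #|[set y in P | (y < x)%N]|.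

(* The term e_(F \ x) (x) x*m of the Koszul differential of e_F (x) m; [inord]
   truncates, but it is exact whenever p is a valid basis element (kface2E). *)
Definition kface (p : kbasis) (x : 'I_n) : kbasis :=
  (p.1 :\ x, [ffun y => inord (p.2 y + (y == x))]).

Lemma kbasis_eq (p q : kbasis) : p.1 = q.1 -> (forall y, p.2 y = q.2 y :> nat) -> p = q.
Proof.
by case: p q => [p1 p2] [q1 q2] /= -> eq2; congr (_, _); apply/ffunP => y; apply/val_inj/eq2.
Qed.

Lemma kvalid_le i (p : kbasis) y : kvalid i p -> (p.2 y <= j - i)%N.
Proof.
by case/and4P => _ _ /eqP <- _; rewrite /mdeg (bigD1 y) //= leq_addr.
Qed.

Lemma kface2E i (p : kbasis) x y :
  kvalid i.+1 p -> (kface p x).2 y = (p.2 y + (y == x))%N :> nat.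
Proof.
move=> vp; rewrite ffunE inordK //; have := kvalid_le y vp.
by case/and4P: vp => _ ij _ _; case: (y == x) => /=; lia.
Qed.

Lemma kfaceC i (p : kbasis) x y : kvalid i.+2 p -> kface (kface p x) y = kface (kface p y) x.
Proof.
move=> vp; apply: kbasis_eq => [|z]; first exact: setD1C.
have := kvalid_le z vp; case/and4P: vp => _ ij _ _ le_z.
have fits1 (b : bool) : (p.2 z + b < j.+1)%N by case: b => /=; lia.
have fits2 (b1 b2 : bool) : (p.2 z + b1 + b2 < j.+1)%N by case: b1; case: b2 => /=; lia.
by rewrite !ffunE !inordK ?fits1 ?fits2 // addnAC.
Qed.

Lemma mdeg_kface i (p : kbasis) x : kvalid i.+1 p -> mdeg (kface p x).2 = (mdeg p.2).+1.
Proof.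
move=> vp; rewrite /mdeg (eq_bigr _ (fun z _ => kface2E x z vp)) big_split /=.
suff -> : (\sum_z (z == x) = 1)%N by rewrite addn1.
by rewrite (bigD1 x) //= eqxx big1 // => z /negbTE ->.
Qed.

Lemma kvalid_kface i (p : kbasis) x : x \in p.1 -> kvalid i.+1 p ->
  ~~ in_sqpow e k (fun y => p.2 y + (y == x))%N -> kvalid i (kface p x).
Proof.
move=> xp vp notI; have := vp; case/and4P => /eqP cp ij /eqP dp _.
apply/and4P; split.
- by rewrite /= (cardsD1 x) xp in cp; rewrite -[i]/(i.+1.-1) -cp.
- exact: ltnW.
- by rewrite (mdeg_kface x vp) dp subnSK.
- apply: contra notI; apply: in_sqpow_mono => y; by rewrite (kface2E x y vp).
Qed.

Lemma kd_entryP i (p q : kbasis) : kd_entry i p q != 0 ->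
  exists2 x, x \in p.1 & [/\ q = kface p x, (0 < i)%N, kvalid i p, kvalid i.-1 q
                             & kd_entry i p q = ksign p.1 x].
Proof.
rewrite /kd_entry; case: pickP => [x|]; last by rewrite eqxx.
rewrite inE => /andP[_ xp]; case: ifP => [|_]; last by rewrite eqxx.
case/and5P=> i0 vp vq /eqP q1 /forallP q2 _; exists x => //; split=> //.
case: i i0 vp vq => // i _ vp _; apply: kbasis_eq => // y.
by rewrite (kface2E x y vp); apply/eqP.
Qed.

Lemma kd_entry_kface i (p : kbasis) x : x \in p.1 -> kvalid i.+1 p -> kvalid i (kface p x) ->
  kd_entry i.+1 p (kface p x) = ksign p.1 x.
Proof.
move=> xp vp vq; rewrite /kd_entry.
have -> : p.1 :\: (kface p x).1 = [set x].
  apply/setP => y; rewrite !inE.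
  by case: eqVneq => [->|] /=; [rewrite xp | case: (y \in p.1)].
rewrite pick_set1 vp vq eqxx /=.
by case: forallP => // -[] y; rewrite (kface2E x y vp).
Qed.

Lemma ksign_pair (P : {set 'I_n}) x y : x \in P -> y \in P -> x != y ->
  ksign P x * ksign (P :\ x) y + ksign P y * ksign (P :\ y) x = 0.
Proof.
move=> xP yP xy; rewrite -!exprD; apply: signr_add_eq0.
have yPx : y \in P :\ x by rewrite !inE eq_sym xy.
have xPy : x \in P :\ y by rewrite !inE xy.
rewrite (card_lt_setD1 x yP) (card_lt_setD1 y xP) (card_lt_setD1 y yPx).
rewrite (card_lt_setD1 x xPy) setD1C !ltnn.
suff : ((x < y) + (y < x) = 1)%N by lia.
by case: ltngtP xy => // /val_inj ->; rewrite eqxx.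
Qed.


Lemma kmat_mulmx0 i : kmat e K k j i.+1 *m kmat e K k j i = 0.
Proof.
apply/matrixP => a c; rewrite !mxE (reindex enum_rank) /=; last exact/onW_bij/enum_rank_bij.
under eq_bigr do rewrite !mxE enum_rankK.
move: (enum_val a) (enum_val c) => p r.
case: (pickP (fun q => kd_entry i.+1 p q * kd_entry i q r != 0)) => [q0|]; last first.
  by move=> zero; apply: big1 => q _; apply/eqP/negbFE/zero.
rewrite mulf_eq0 => /norP[/kd_entryP[x xp [-> _ vp vq _]]].
case/kd_entryP=> y /[!inE] /andP[yx yp] [-> i0 _ vr _].
case: i i0 vp vq vr => // i _ vp vq vr.
have vq' : kvalid i.+1 (kface p y).
  apply: (kvalid_kface yp vp); case/and4P: (vr) => _ _ _; apply: contra.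
  apply: in_sqpow_mono => z; rewrite (kface2E y z vq) (kface2E x z vp) !addn_gt0.
  by case/orP => ->; rewrite ?orbT.
rewrite (sum_two_support (a := kface p x) (b := kface p y)).
- have yq : y \in (kface p x).1 by rewrite !inE yx.
  have xq' : x \in (kface p y).1 by rewrite !inE eq_sym yx.
  rewrite (kd_entry_kface xp vp vq) (kd_entry_kface yq vq vr).
  rewrite (kfaceC x y vp) in vr *.
  by rewrite (kd_entry_kface yp vp vq') (kd_entry_kface xq' vq' vr) ksign_pair // eq_sym.
- by apply/eqP => /(congr1 (fun q : kbasis => y \in q.1)); rewrite !inE yx yp eqxx.
move=> q /[!mulf_eq0] /norP[/kd_entryP[x' x'p [-> _ _ _ _]]].
case/kd_entryP=> y' _ [r_eq _ _ _ _].
have : x' \notin (kface (kface p x) y).1 by rewrite r_eq !inE eqxx andbF.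
by rewrite !inE x'p andbT negb_and !negbK => /orP[] /eqP ->; rewrite eqxx ?orbT.
Qed.

Lemma kd_entry_eq0 i (p q : kbasis) :
  (forall x, x \in p.1 -> in_sqpow e k (fun y => p.2 y + (y == x))%N) -> kd_entry i p q = 0.
Proof.
move=> cyc; apply/eqP/negPn/negP => /kd_entryP[x xp [-> i0 vp vq _]].
case: i i0 vp vq => // i _ vp /and4P[_ _ _ /negP[]].
by apply: in_sqpow_mono (cyc x xp) => y; rewrite (kface2E x y vp).
Qed.

Lemma betti_neq0 i (p0 : kbasis) (phi : kbasis -> K) :
  kvalid i p0 -> (forall q, kd_entry i p0 q = 0) ->
  (forall p, \sum_q kd_entry i.+1 p q * phi q = 0) -> phi p0 != 0 ->
  betti e K k j i != 0%N.
Proof.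
move=> vp0 cycle cocycle phi0.
pose S := enum_rank @: [set p : kbasis | kvalid i p].
have notS (a : 'I_#|{: kbasis}|) : a \notin S -> ~~ kvalid i (enum_val a).
  by apply: contra => va; rewrite -[a]enum_valK imset_f ?inE.
have rk : (\rank (kmat e K k j i) + \rank (kmat e K k j i.+1) < #|S|)%N.
  apply: (rank_add_lt_support (z := delta_mx 0 (enum_rank p0))
                              (phi := \col_b phi (enum_val b))).
  - move=> a b /notS; rewrite mxE; apply: contraNeq => /kd_entryP[x _ []] //.
  - move=> a b /notS; rewrite mxE; apply: contraNeq => /kd_entryP[x _ []] //.
  - move=> a aS; rewrite mxE eqxx /=; case: eqP aS => // -> /negP[].
    by apply: imset_f; rewrite inE.
  - exact: kmat_mulmx0.
  - by rewrite -rowE; apply/rowP => b; rewrite !mxE enum_rankK cycle.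
  - apply/colP => a; rewrite !mxE (reindex enum_rank) /=; last exact/onW_bij/enum_rank_bij.
    by under eq_bigr do rewrite !mxE enum_rankK; apply: cocycle.
  - by apply: contra phi0 => /eqP/matrixP/(_ 0 0); rewrite -rowE !mxE enum_rankK => ->.
rewrite card_imset in rk; last exact: enum_rank_inj.
by rewrite /betti; apply/eqP; lia.
Qed.

Hypothesis j_gt0 : (0 < j)%N.

Definition compl_mono (F : {set 'I_n}) : {ffun 'I_n -> 'I_j.+1} := [ffun v => inord (v \notin F)].

Lemma compl_monoE F v : compl_mono F v = (v \notin F) :> nat.
Proof. by rewrite ffunE inordK //; case: (v \notin F). Qed.

Lemma kface_compl (P : {set 'I_n}) y : y \in P ->
  kface (P, compl_mono P) y = (P :\ y, compl_mono (P :\ y)).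
Proof.
move=> yP; congr (_, _); apply/ffunP => v; apply: val_inj.
rewrite /= ffunE [RHS]compl_monoE compl_monoE !inE.
by case: eqVneq => [->|_]; rewrite ?yP ?addn0 inordK //; case: (v \in P).
Qed.

Lemma kface_compl_inv i (p : kbasis) x : kvalid i.+1 p -> x \in p.1 ->
  (kface p x).2 = compl_mono (p.1 :\ x) -> p.2 = compl_mono p.1.
Proof.
move=> vp xp face_x; apply/ffunP => v; apply: ord_inj.
have := congr1 (fun f : {ffun 'I_n -> 'I_j.+1} => f v : nat) face_x.
rewrite (kface2E x v vp) !compl_monoE !inE.
by case: eqVneq => [->|_]; rewrite ?xp ?addn0 //=; lia.
Qed.

End KoszulComplex.

Section Transversals.
Variables (n : nat) (beta : 'I_n -> nat).

Definition transversal_of (F : {set 'I_n}) : bool :=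
  [forall v, [exists u in F, beta u == beta v]] &&
  [forall u in F, forall u' in F, (beta u == beta u') ==> (u == u')].

Lemma transversal_ofP (F : {set 'I_n}) :
  reflect ((forall v, exists2 u, u \in F & beta u = beta v) /\ {in F &, injective beta})
          (transversal_of F).
Proof.
apply: (iffP andP) => [[/forallP cov /forall_inP inj] | [cov inj]]; split.
- by move=> v; have /exists_inP[u uF /eqP] := cov v; exists u.
- move=> u u' uF u'F buu'; have /forall_inP/(_ u' u'F)/implyP := inj u uF.
  by rewrite buu' eqxx => /(_ isT)/eqP.
- by apply/forallP => v; have [u uF buv] := cov v; apply/exists_inP; exists u; rewrite ?buv.
- by apply/forall_inP => u uF; apply/forall_inP => u' u'F; apply/implyP => /eqP/inj ->.
Qed.

Lemma transversal_swap (P : {set 'I_n}) x x' :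
  x \in P -> x' \in P :\ x -> beta x' = beta x ->
  transversal_of (P :\ x) -> transversal_of (P :\ x').
Proof.
move=> xP /setD1P[x'x x'P] bx' /transversal_ofP[cov inj]; apply/transversal_ofP; split.
  move=> v; have [u /setD1P[ux uP] buv] := cov v.
  have [eux'|ux'] := eqVneq u x'; last by exists u; rewrite ?inE ?ux'.
  by exists x; rewrite ?inE 1?eq_sym ?x'x // -buv eux' bx'.
have to_x' u : u \in P :\ x' -> beta u = beta x -> u = x.
  move=> /setD1P[ux' uP] bu; apply/eqP; apply: contraNT ux' => ux.
  by apply/eqP/inj; rewrite ?inE ?ux ?uP ?x'x ?x'P // bu bx'.
move=> u u' uPx' u'Px' buu'.
have [eux|ux] := eqVneq u x; have [eu'x|u'x] := eqVneq u' x.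
- by rewrite eux eu'x.
- by rewrite eux (to_x' u' u'Px') // -buu' eux.
- by rewrite eu'x (to_x' u uPx') // buu' eu'x.
- by move: uPx' u'Px' => /setD1P[_ uP] /setD1P[_ u'P]; apply: inj; rewrite ?inE ?ux ?u'x.
Qed.

Definition inverted (y z : 'I_n) : bool := (beta y < beta z) && (z < y).

Definition inversions (F : {set 'I_n}) : nat := \sum_(y in F) \sum_(z in F) inverted y z.

Lemma inversions_setD1 (F : {set 'I_n}) x : x \in F ->
  inversions F = inversions (F :\ x) + \sum_(g in F :\ x) (inverted x g + inverted g x).
Proof.
move=> xF; rewrite /inversions (big_setD1 x xF) /=.
under [X in _ + X]eq_bigr do rewrite (big_setD1 x xF) /=.
rewrite (big_setD1 x xF) /= [inverted x x]/inverted ltnn !big_split /=; lia.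
Qed.

Lemma sum_inverted (G : {set 'I_n}) w b :
  beta w = b -> {in G, forall g, g != w /\ beta g != b} ->
  \sum_(g in G) (w < g) + \sum_(g in G) (inverted w g + inverted g w) =
  \sum_(g in G) (b < beta g) + 2 * \sum_(g in G) ((beta g < b) && (w < g)).
Proof.
move=> bw Gw; rewrite -!big_split big_distrr -big_split /=; apply: eq_bigr => g /Gw[gw bg].
rewrite /inverted bw; have gw' : nat_of_ord g != w by [].
by move: bg gw'; lia.
Qed.

Lemma sum_lt_gt (G : {set 'I_n}) w : w \notin G ->
  \sum_(g in G) (g < w) + \sum_(g in G) (w < g) = #|G|.
Proof.
move=> wG; rewrite -big_split -sum1_card; apply: eq_bigr => g gG /=.
have gw : val g != val w by apply: contraNneq wG => /val_inj <-.
by case: ltngtP gw.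
Qed.

End Transversals.

Section TransversalCocycle.
Variables (n : nat) (e : rel 'I_n) (K : fieldType) (k j i : nat) (beta : 'I_n -> nat).
Local Notation kbasis := (kbasis_t n j).
Local Notation compl_mono := (compl_mono j).
Local Open Scope ring_scope.

Lemma ksign_inversions_pair (P : {set 'I_n}) x x' :
  x \in P -> x' \in P :\ x -> beta x' = beta x -> {in P :\ x &, injective beta} ->
  ksign K P x * (-1) ^+ inversions beta (P :\ x) +
  ksign K P x' * (-1) ^+ inversions beta (P :\ x') = 0.
Proof.
move=> xP x'Px bx' inj; have /setD1P[x'x x'P] := x'Px.
have xPx' : x \in P :\ x' by rewrite !inE eq_sym x'x.
set G := P :\ x :\ x'.
have GC : P :\ x' :\ x = G by rewrite setD1C.
have Gx g : g \in G -> g != x /\ beta g != beta x.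
  move=> /setD1P[gx' /setD1P[gx gP]]; split => //; apply: contra gx' => /eqP bg.
  by apply/eqP/inj; rewrite ?inE ?gx ?gP ?x'x // bg bx'.
have Gx' g : g \in G -> g != x' /\ beta g != beta x.
  by move=> gG; have /setD1P[gx' _] := gG; have [_ bg] := Gx g gG.
(* Modulo 2 the two exponents add up to 2 |G| + 1: every g in G is counted
   once on each side of x and once on each side of x'. *)
rewrite -!exprD; apply: signr_add_eq0.
rewrite /ksign (card_lt_setD1 x x'P) (card_lt_setD1 x xPx') GC.
rewrite (card_lt_setD1 x' xP) (card_lt_setD1 x' x'Px) -/G !ltnn !card_lt_sum.
rewrite (inversions_setD1 beta x'Px) (inversions_setD1 beta xPx') GC -/G.
have := sum_inverted bx' Gx'; have := sum_inverted (erefl (beta x)) Gx.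
have := sum_lt_gt (_ : x \notin G); have := sum_lt_gt (_ : x' \notin G).
have : ((x < x') + (x' < x) = 1)%N by case: ltngtP x'x => // /val_inj ->; rewrite eqxx.
rewrite !inE !eqxx ?andbF; lia.
Qed.

Hypothesis j_gt0 : (0 < j)%N.

Definition transversal_cochain (q : kbasis) : K :=
  if transversal_of beta q.1 && (q.2 == compl_mono q.1) then (-1) ^+ inversions beta q.1 else 0.

Hypothesis kvalid_transversal :
  forall F, transversal_of beta F -> #|F| = i -> kvalid e k i ((F, compl_mono F) : kbasis).

Lemma transversal_cocycle (p : kbasis) :
  \sum_q kd_entry e K k i.+1 p q * transversal_cochain q = 0.
Proof.
case: (pickP (fun q => kd_entry e K k i.+1 p q * transversal_cochain q != 0)) => [q0|]; last first.
  by move=> zero; apply: big1 => q _; apply/eqP/negbFE/zero.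
case: p => P m; rewrite mulf_eq0 => /norP[/kd_entryP[x /= xP [-> _ vp vq _]]].
rewrite /transversal_cochain; case: ifP => [/andP[Tx /eqP m_x] _|]; last by rewrite eqxx.
have m_eq : m = compl_mono P := kface_compl_inv j_gt0 vp xP m_x.
subst m; rewrite /= in Tx; case/transversal_ofP: (Tx) => cov _; have [x' x'Px bx'] := cov x.
have /setD1P[x'x x'P] := x'Px.
have Tx' := transversal_swap xP x'Px bx' Tx.
have vq' : kvalid e k i (kface (P, compl_mono P) x').
  rewrite (kface_compl j_gt0) //; apply: kvalid_transversal Tx' _.
  case/and4P: vq => /eqP <- _ _ _ /=.
  by have := cardsD1 x P; have := cardsD1 x' P; rewrite xP x'P => -> /addnI.
(* P has exactly one repeated block, {x, x'}: only the faces at x and x' are transversals. *)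
rewrite (sum_two_support (a := kface (P, compl_mono P) x) (b := kface (P, compl_mono P) x')).
- rewrite !kd_entry_kface // /transversal_cochain !(kface_compl j_gt0) //= Tx Tx' !eqxx /=.
  by apply: ksign_inversions_pair => //; case/transversal_ofP: Tx.
- by apply/eqP => /(congr1 (fun q : kbasis => x \in q.1)); rewrite /= !inE eqxx xP eq_sym x'x.
move=> q /[!mulf_eq0] /norP[/kd_entryP[y /= yP [-> _ _ _ _]]].
rewrite /transversal_cochain (kface_compl j_gt0) //= eqxx andbT.
case: ifP => [/transversal_ofP[_ inj_y] _|]; last by rewrite eqxx.
have : (y == x) || (y == x').
  apply/negPn/negP; rewrite negb_or => /andP[yx yx']; move/eqP: x'x; apply.
  have x'Py : x' \in P :\ y by rewrite !inE eq_sym yx' x'P.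
  have xPy : x \in P :\ y by rewrite !inE eq_sym yx xP.
  exact: inj_y x'Py xPy bx'.
by case/orP => /eqP ->; rewrite !(kface_compl j_gt0) // eqxx ?orbT.
Qed.

End TransversalCocycle.

Lemma exists_subset_card (T : finType) (A B : {set T}) m :
  A \subset B -> #|A| <= m <= #|B| ->
  exists Y : {set T}, [/\ A \subset Y, Y \subset B & #|Y| = m].
Proof.
move=> AB /andP[Am mB]; rewrite -(subnKC Am) in mB *; move: (m - #|A|) mB => d {Am}.
elim: d A AB => [|d IHd] A AB cAB; first by exists A; rewrite addn0.
have [b /setDP[bB bA]] : exists b, b \in B :\: A.
  apply/set0Pn; apply: contraTneq cAB => /eqP; rewrite setD_eq0 => /subset_leq_card; lia.
have [||Y [bAY YB cY]] := IHd (b |: A); first by rewrite subUset sub1set bB AB.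
  by rewrite cardsU1 bA; lia.
exists Y; split => //; first exact: subset_trans (subsetUr _ _) bAY.
by rewrite cY cardsU1 bA addnS.
Qed.

Section Matchings.
Variables (n : nat) (e : rel 'I_n).
Hypothesis e_irr : irreflexive e.

Lemma card_edge f : is_edge e f -> #|f| = 2.
Proof.
case/existsP => x /existsP[y /andP[exy /eqP ->]]; rewrite cards2.
by case: eqVneq exy => [->|]; rewrite ?e_irr.
Qed.

Lemma matching_edge (M : {set {set 'I_n}}) f : matching e M -> f \in M -> is_edge e f.
Proof. by case/andP => /forall_inP edgeM _; apply: edgeM. Qed.

Lemma matchingS (M N : {set {set 'I_n}}) : matching e M -> N \subset M -> matching e N.
Proof.
case/andP => /forall_inP edgeM /forall_inP disjM /subsetP NM; apply/andP; split.
  by apply/forall_inP => f /NM; apply: edgeM.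
by apply/forall_inP => f /NM/disjM/forall_inP dis_f; apply/forall_inP => g /NM/dis_f.
Qed.

Lemma matching_eq (M : {set {set 'I_n}}) f g v :
  matching e M -> f \in M -> g \in M -> v \in f -> v \in g -> f = g.
Proof.
case/andP => _ /forall_inP disjM fM gM vf vg; apply/eqP; apply: contraTT isT => fg.
have /forall_inP/(_ g gM)/implyP/(_ fg) := disjM f fM.
by move/disjoint_setI0/setP/(_ v); rewrite !inE vf vg.
Qed.

Lemma card_cover_matching (M : {set {set 'I_n}}) : matching e M -> #|cover M| = 2 * #|M|.
Proof.
move=> mM; have /eqP <- : trivIset M.
  apply/trivIsetP => f g fM gM fg; rewrite -setI_eq0; apply/eqP/setP => v; rewrite !inE.
  by apply/negP => /andP[vf vg]; case/eqP: fg; apply: matching_eq mM fM gM vf vg.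
under eq_bigr => f fM do rewrite (card_edge (matching_edge mM fM)).
by rewrite sum_nat_const mulnC.
Qed.

Lemma admissible2_joined_edges (M : {set {set 'I_n}}) : admissible_matching e 2 M ->
  exists A0 : {set {set 'I_n}}, [/\ A0 \subset M, #|A0| <= 2 &
    forall f g a b, f \in M -> g \in M -> f != g -> a \in f -> b \in g -> e a b -> f \in A0].
Proof.
case=> _ [P [partP gapP block_gt0 sum_le _]]; have [/eqP covP _ _] := and3P partP.
exists (cover [set A in P | 1 < #|A|]); split.
- apply/subsetP => f /bigcupP[A /setIdP[AP _] fA].
  by rewrite -covP; apply/bigcupP; exists A.
- have excess : \sum_(A in P) (#|A| - 1) <= 1.
    suff : \sum_(A in P) #|A| = \sum_(A in P) (#|A| - 1) + #|P| by lia.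
    rewrite (eq_bigr (fun A : {set {set 'I_n}} => #|A| - 1 + 1)) => [|A /block_gt0 ?].
      by rewrite big_split sum1_card.
    by rewrite subnK.
  apply: leq_trans (leq_card_cover _) _.
  apply: (@leq_trans (2 * \sum_(A in P) (#|A| - 1))); last lia.
  rewrite big_distrr [X in X <= _]big_mkcond [X in _ <= X]big_mkcond /=.
  by apply: leq_sum => A _; rewrite inE; case: (A \in P) => //=; case: ltnP => //; lia.
move=> f g a b fM gM fg af bg eab; rewrite -covP in fM gM.
have same_block : pblock P f = pblock P g.
  apply/eqP; apply: contraTT eab => neq.
  move/forall_inP: gapP => /(_ _ (pblock_mem fM))/forall_inP/(_ _ (pblock_mem gM)).
  move=> /implyP/(_ neq)/forall_inP/(_ f); rewrite mem_pblock fM => /(_ isT).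
  move=> /forall_inP/(_ g); rewrite mem_pblock gM => /(_ isT)/andP[_].
  by move=> /forall_inP/(_ a af)/forall_inP/(_ b bg).
apply/bigcupP; exists (pblock P f); last by rewrite mem_pblock.
rewrite inE pblock_mem //=; have : [set f; g] \subset pblock P f.
  by rewrite subUset !sub1set {2}same_block !mem_pblock fM gM.
by move/subset_leq_card; rewrite cards2 fg.
Qed.

End Matchings.

Section PerfectMatching.
Variables (n : nat) (e : rel 'I_n) (M : {set {set 'I_n}}).
Hypotheses (e_irr : irreflexive e) (pmM : perfect_matching e M).

Let mM : matching e M. Proof. by case/andP: pmM. Qed.

Definition medge (v : 'I_n) : {set 'I_n} := odflt set0 [pick f in M | v \in f].

Lemma medgeP v : medge v \in M /\ v \in medge v.
Proof.
rewrite /medge; case: pickP => [f /andP[] //|none] /=.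
have : v \in cover M by case/andP: pmM => _ /eqP ->; rewrite inE.
by case/bigcupP => f fM vf; have := none f; rewrite fM vf.
Qed.

Lemma medge_eq f v : f \in M -> v \in f -> medge v = f.
Proof. by move=> fM vf; have [vM vv] := medgeP v; apply: matching_eq mM vM fM vv vf. Qed.

Lemma card_perfect_matching : n = 2 * #|M|.
Proof.
by rewrite -(card_cover_matching e_irr mM); case/andP: pmM => _ /eqP ->; rewrite cardsT card_ord.
Qed.

Lemma exists_closed_edges k : admissible_matching e 2 M -> 2 <= k <= #|M| ->
  exists Y : {set {set 'I_n}}, [/\ Y \subset M, #|Y| = k &
    forall a b, e a b -> medge a != medge b -> medge a \in Y].
Proof.
move=> adm /andP[k2 kM]; have [A0 [A0M A02 joined]] := admissible2_joined_edges adm.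
have A0k : #|A0| <= k <= #|M| by rewrite (leq_trans A02 k2).
have [Y [A0Y YM cY]] := exists_subset_card A0M A0k.
exists Y; split=> // a b eab neq; apply: (subsetP A0Y); have [aM aa] := medgeP a.
by have [bM bb] := medgeP b; apply: joined aM bM neq aa bb eab.
Qed.

Section ClosedEdges.
Variables (k : nat) (Y : {set {set 'I_n}}).
Hypotheses (e_sym : symmetric e) (YM : Y \subset M) (Y_card : #|Y| = k) (k_gt0 : 0 < k).
Hypothesis Y_closed : forall a b, e a b -> medge a != medge b -> medge a \in Y.

Definition block (v : 'I_n) : nat := if medge v \in Y then 0 else (enum_rank (medge v)).+1.

Lemma block_eq0 v : (block v == 0) = (medge v \in Y).
Proof. by rewrite /block; case: ifP. Qed.

Lemma block_medge u v : medge u \notin Y -> block u = block v -> medge u = medge v.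
Proof. by rewrite /block => /negbTE ->; case: ifP => // _ [] /ord_inj/enum_rank_inj. Qed.

Lemma block_edge a b : e a b -> block a = block b.
Proof.
move=> eab; have [same|neq] := eqVneq (medge a) (medge b); first by rewrite /block same.
have eba : e b a by rewrite e_sym.
by rewrite /block (Y_closed eab neq) (Y_closed eba) // eq_sym.
Qed.

Lemma mem_cover_closed v : (v \in cover Y) = (medge v \in Y).
Proof.
apply/bigcupP/idP => [[f fY vf]|]; last by exists (medge v); rewrite ?(medgeP v).2.
by rewrite (medge_eq (subsetP YM f fY) vf).
Qed.

Lemma exists_medge_closed : exists v, medge v \in Y.
Proof.
have /card_gt0P[f fY] : 0 < #|Y| by rewrite Y_card.
have fM := subsetP YM f fY; have /card_gt0P[v vf] : 0 < #|f|.
  by rewrite (card_edge e_irr (matching_edge mM fM)).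
by exists v; rewrite (medge_eq fM vf).
Qed.

Section Transversal.
Variable F : {set 'I_n}.
Hypothesis TF : transversal_of block F.

Lemma transversal_meets_closed : exists2 u, u \in F & medge u \in Y.
Proof.
have [v vY] := exists_medge_closed; case/transversal_ofP: TF => /(_ v)[u uF bu] _.
by exists u; rewrite // -block_eq0 bu block_eq0.
Qed.

Lemma transversal_closed_eq u v : u \in F -> v \in F -> medge u \in Y -> medge v \in Y -> u = v.
Proof.
case/transversal_ofP: TF => _ inj uF vF; rewrite -!block_eq0 => /eqP bu /eqP bv.
by apply: inj; rewrite ?bu ?bv.
Qed.

Lemma medge_avoiding_transversal a b : e a b -> a \notin F -> b \notin F -> medge a \in Y.
Proof.
move=> eab aF bF; apply: contraTT isT => aY; case/transversal_ofP: TF => /(_ a)[u uF bu] _.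
have medge_ab : medge a = [set a; b].
  apply/eqP; rewrite eq_sym eqEcard subUset !sub1set (medgeP a).2.
  rewrite (block_medge aY (block_edge eab)) (medgeP b).2 cards2.
  rewrite (card_edge e_irr (matching_edge mM (medgeP b).1)).
  by case: eqVneq eab => // ->; rewrite e_irr.
have : u \in medge a by rewrite (block_medge aY (esym bu)) (medgeP u).2.
by rewrite medge_ab !inE => /orP[] /eqP uab; [move: aF | move: bF]; rewrite -uab uF.
Qed.

Lemma transversal_compl_notin_sqpow : ~~ in_sqpow e k (fun v => v \notin F).
Proof.
have [u uF uY] := transversal_meets_closed.
apply/negP => /existsP[N /and3P[mN /eqP cN /forall_inP avoidF]].
have notF x : x \in cover N -> x \notin F by move/avoidF; case: (x \in F).
have sub : cover N \subset cover Y :\ u.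
  apply/subsetP => x xN; rewrite !inE mem_cover_closed.
  have -> : x != u by apply: contraNneq (notF x xN) => ->.
  have /bigcupP[f fN xf] := xN.
  have /existsP[a /existsP[b /andP[eab /eqP fab]]] := matching_edge mN fN.
  have [aN bN] : a \in cover N /\ b \in cover N.
    by split; apply/bigcupP; exists f; rewrite // fab !inE eqxx ?orbT.
  have eba : e b a by rewrite e_sym.
  move: xf; rewrite fab !inE => /orP[] /eqP ->.
    exact: medge_avoiding_transversal eab (notF a aN) (notF b bN).
  exact: medge_avoiding_transversal eba (notF b bN) (notF a aN).
have := subset_leq_card sub; have := cardsD1 u (cover Y).
rewrite mem_cover_closed uY (card_cover_matching e_irr mN) cN.
by rewrite (card_cover_matching e_irr (matchingS mM YM)) Y_card; lia.
Qed.

Lemma transversal_cycle x : x \in F -> in_sqpow e k (fun v => (v \notin F) || (v == x)).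
Proof.
move=> xF; have [v0 v0F v0Y] := transversal_meets_closed; have /transversal_ofP[_ inj] := TF.
have medge_x u : u \in F -> medge u = medge x -> u = x.
  by move=> uF eq_ux; apply: inj; rewrite /block ?eq_ux.
have x_out : medge x \notin Y :\ medge v0.
  rewrite !inE negb_and negbK; case: (boolP (medge x \in Y)) => [xY|]; last by rewrite orbT.
  by rewrite (transversal_closed_eq xF v0F xY v0Y) eqxx.
apply/existsP; exists (medge x |: (Y :\ medge v0)); apply/and3P; split.
- apply: matchingS mM _; rewrite subUset sub1set (medgeP x).1 /=.
  exact: subset_trans (subD1set _ _) YM.
- by rewrite -Y_card (cardsD1 (medge v0) Y) v0Y cardsU1 x_out.
apply/forall_inP => v /bigcupP[g]; rewrite !inE lt0b => /orP[/eqP ->|/andP[gv0 gY]] vg.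
  have := medge_x v; rewrite (medge_eq (medgeP x).1 vg).
  by case: (v \in F) => //= /(_ isT erefl) ->; rewrite eqxx.
have vY : medge v \in Y by rewrite (medge_eq (subsetP YM g gY) vg).
apply/orP; left; apply: contra gv0 => vF.
by rewrite -(medge_eq (subsetP YM g gY) vg) (transversal_closed_eq vF v0F vY v0Y).
Qed.

End Transversal.

Lemma exists_transversal : exists2 F, transversal_of block F & #|F| = #|M| - k + 1.
Proof.
have [v0 v0Y] := exists_medge_closed; have /eqP b0 : block v0 == 0 by rewrite block_eq0.
pose rep (f : {set 'I_n}) := odflt v0 [pick v in f].
have medge_rep f : f \in M -> medge (rep f) = f.
  move=> fM; apply: (medge_eq fM); rewrite /rep; case: pickP => [//|none].
  by have := card_edge e_irr (matching_edge mM fM); rewrite (eq_card0 none).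
pose F := v0 |: [set rep f | f in M :\: Y].
have memF u : u \in F -> u = v0 \/ medge u \notin Y /\ rep (medge u) = u.
  rewrite !inE => /orP[/eqP ->|/imsetP[f /setDP[fM fY] ->]]; [by left | right].
  by rewrite medge_rep.
have v0F : v0 \notin [set rep f | f in M :\: Y].
  by apply/imsetP => -[f /setDP[fM fY] v0f]; move: v0Y; rewrite v0f medge_rep // (negbTE fY).
exists F.
  apply/transversal_ofP; split=> [v|u u' /memF[->|[uY ru]] /memF[->|[u'Y ru']]] //.
  - have [vY|vY] := boolP (medge v \in Y).
      by exists v0; rewrite ?setU11 // /block vY v0Y.
    exists (rep (medge v)); last by rewrite /block medge_rep ?(medgeP v).1.
    by rewrite setU1r //; apply: imset_f; rewrite inE vY (medgeP v).1.
  - by move/esym/eqP; rewrite b0 block_eq0 (negbTE u'Y).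
  - by move/eqP; rewrite b0 block_eq0 (negbTE uY).
  - by move/(block_medge uY) => medge_uu'; rewrite -ru -ru' medge_uu'.
rewrite cardsU1 v0F card_in_imset => [|f g /setDP[fM _] /setDP[gM _] fg].
  by rewrite cardsD (setIidPr YM) Y_card addnC.
by rewrite -(medge_rep f fM) fg medge_rep.
Qed.

Lemma transversal_kvalid F : transversal_of block F -> #|F| = #|M| - k + 1 ->
  kvalid e k (#|M| - k + 1) ((F, compl_mono (2 * #|M|) F) : kbasis_t n (2 * #|M|)).
Proof.
move=> TF cF; have kM : k <= #|M| by rewrite -Y_card subset_leq_card.
have j_gt0 : 0 < 2 * #|M| by lia.
apply/and4P; split; first by rewrite cF.
- lia.
- have -> : mdeg (compl_mono (2 * #|M|) F) = #|~: F|.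
    rewrite /mdeg -[#|~: F|]sum1_card [RHS]big_mkcond /=; apply: eq_bigr => v _.
    by rewrite (compl_monoE j_gt0) inE; case: (v \in F).
  by rewrite cardsCs setCK card_ord cF -card_perfect_matching.
apply: contra (transversal_compl_notin_sqpow TF); apply: in_sqpow_mono => v.
by rewrite (compl_monoE j_gt0).
Qed.

Lemma betti_closed_edges_neq0 (K : fieldType) : betti e K k (2 * #|M|) (#|M| - k + 1) != 0.
Proof.
have j_gt0 : 0 < 2 * #|M| by have := subset_leq_card YM; rewrite Y_card; lia.
have [F TF F_card] := exists_transversal.
apply: (betti_neq0 (p0 := (F, compl_mono _ F)) (phi := transversal_cochain K block)).
- exact: transversal_kvalid.
- move=> q; apply: kd_entry_eq0 => x xF; apply: in_sqpow_mono (transversal_cycle TF xF) => v.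
  by rewrite (compl_monoE j_gt0); case: (v \in F); case: (v == x).
- exact: transversal_cocycle j_gt0 transversal_kvalid.
- by rewrite /transversal_cochain TF eqxx signr_eq0.
Qed.

End ClosedEdges.

End PerfectMatching.

Theorem lemma4p9 (K : fieldType) (n : nat) (e : rel 'I_n)
  (e_sym : symmetric e) (e_irr : irreflexive e) (M : {set {set 'I_n}}) :
  perfect_matching e M -> admissible_matching e 2 M ->
  forall k : nat, 2 <= k <= #|M| ->
    betti e K k (2 * #|M|) (#|M| - k + 1) != 0.
Proof.
move=> pmM adm k k_range.
have [Y [YM Y_card Y_closed]] := exists_closed_edges pmM adm k_range.
have k_gt0 : 0 < k by case/andP: k_range; lia.
exact (betti_closed_edges_neq0 e_irr pmM e_sym YM Y_card k_gt0 Y_closed K).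
Qed.
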